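(* Let $f:[0,1]\to[0,1]$, $f(x)=\frac{1-x}{1+x}$. Then $f$ is a bijection and $f\circ T\circ f^{-1}=T_E$ on $[0,1]$, where $T$ is the OOCF map and $T_E$ is the even integer continued fraction map.
   Context: For integers $k\ge1$ put $B(k+1,-1)=\left[\frac{k-1}{k},\frac{2k-1}{2k+1}\right]$ and $B(k,1)=\left[\frac{2k-1}{2k+1},\frac{k}{k+1}\right]$. The OOCF map $T:[0,1]\to[0,1]$ is $T(x)=\frac{kx-(k-1)}{k-(k+1)x}$ for $x\in B(k+1,-1)$, $T(x)=\frac{k-(k+1)x}{kx-(k-1)}$ for $x\in B(k,1)$ ($k\ge1$), and $T(1)=1$. The EICF map $T_E:[0,1]\to[0,1]$ is $T_E(y)=\frac1y-2k$ for $y\in\left[\frac1{2k+1},\frac1{2k}\right]$, $T_E(y)=2k-\frac1y$ for $y\in\left[\frac1{2k},\frac1{2k-1}\right]$ ($k\ge1$), and $T_E(0)=0$. *)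

From Stdlib Require Import Reals.
Open Scope R_scope.

Definition f_conj (x : R) : R := (1 - x) / (1 + x).

(* T : [0,1] -> [0,1] is the OOCF map: the defining equations of the paper,
   piece by piece (the pieces agree on shared endpoints). Values outside
   [0,1] are irrelevant and left unconstrained. *)
Definition is_OOCF_map (T : R -> R) : Prop :=
  (forall (k : nat) (x : R), (1 <= k)%nat ->
     (INR k - 1) / INR k <= x <= (2 * INR k - 1) / (2 * INR k + 1) ->
     T x = (INR k * x - (INR k - 1)) / (INR k - (INR k + 1) * x)) /\
  (forall (k : nat) (x : R), (1 <= k)%nat ->
     (2 * INR k - 1) / (2 * INR k + 1) <= x <= INR k / (INR k + 1) ->
     T x = (INR k - (INR k + 1) * x) / (INR k * x - (INR k - 1))) /\
  T 1 = 1.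

Definition is_EICF_map (TE : R -> R) : Prop :=
  (forall (k : nat) (y : R), (1 <= k)%nat ->
     1 / (2 * INR k + 1) <= y <= 1 / (2 * INR k) ->
     TE y = 1 / y - 2 * INR k) /\
  (forall (k : nat) (y : R), (1 <= k)%nat ->
     1 / (2 * INR k) <= y <= 1 / (2 * INR k - 1) ->
     TE y = 2 * INR k - 1 / y) /\
  TE 0 = 0.

(* With y = f(x), the map f turns the Möbius pieces of the OOCF map into the
   pieces of the EICF map: on B(k+1,-1) one gets f(T x) = 2k - 1/y and on
   B(k,1) one gets f(T x) = 1/y - 2k.  Since f is a decreasing involution
   sending 1/(2k-1), 1/(2k), 1/(2k+1) to (k-1)/k, (2k-1)/(2k+1), k/(k+1), it
   maps each EICF cylinder onto the matching OOCF cylinder, and every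
   y in (0,1] lies in some EICF cylinder because 1/y >= 1. *)
From Stdlib Require Import Reals Lra Lia ZArith.
Open Scope R_scope.

Lemma f_conj_involutive x : x <> -1 -> f_conj (f_conj x) = x.
Proof.
  intros Hx. unfold f_conj.
  assert (1 + x <> 0) by lra.
  field. split; [assumption | lra].
Qed.

Lemma f_conj_antitone a b : -1 < a -> a <= b -> f_conj b <= f_conj a.
Proof.
  intros Ha Hab.
  assert (Hdiff : f_conj a - f_conj b = 2 * (b - a) * / ((1 + a) * (1 + b)))
    by (unfold f_conj; field; lra).
  assert (0 <= 2 * (b - a) * / ((1 + a) * (1 + b))).
  { apply Rmult_le_pos; [lra |].
    apply Rlt_le, Rinv_0_lt_compat, Rmult_lt_0_compat; lra. }
  lra.
Qed.

Lemma f_conj_unit_interval x : 0 <= x <= 1 -> 0 <= f_conj x <= 1.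
Proof.
  intros Hx.
  assert (H0 : f_conj 1 = 0) by (unfold f_conj; field).
  assert (H1 : f_conj 0 = 1) by (unfold f_conj; field).
  split; [rewrite <- H0 | rewrite <- H1]; apply f_conj_antitone; lra.
Qed.

Lemma one_div_between a b y :
  0 < a -> 0 < y -> a <= 1 / y <= b -> 1 / b <= y <= 1 / a.
Proof.
  intros Ha Hy [Hay Hyb].
  assert (Hinv : y = / (1 / y)) by (field; lra).
  assert (0 < 1 / y) by lra.
  unfold Rdiv at 1 2; rewrite !Rmult_1_l.
  split; rewrite Hinv; apply Rinv_le_contravar; lra.
Qed.

Lemma exists_EICF_digit z : 1 <= z ->
  exists k : nat, (1 <= k)%nat /\
    (2 * INR k - 1 <= z <= 2 * INR k \/ 2 * INR k <= z <= 2 * INR k + 1).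
Proof.
  intros Hz.
  destruct (archimed (z / 2)) as [Hup Hup'].
  set (n := up (z / 2)) in *.
  assert (Hn : (0 < n)%Z) by (apply lt_IZR; lra).
  destruct (Rle_lt_dec (2 * IZR n - 1) z) as [Hodd | Heven].
  - exists (Z.to_nat n).
    rewrite INR_IZR_INZ, Z2Nat.id by lia.
    split; [lia | left; lra].
  - assert (Hn2 : (1 < n)%Z) by (apply lt_IZR; lra).
    exists (Z.to_nat (n - 1)).
    rewrite INR_IZR_INZ, Z2Nat.id, minus_IZR by lia.
    split; [lia | right; lra].
Qed.

Lemma f_conj_OOCF_left (K y : R) : 0 < y -> (2 * K + 1) * y <> 1 ->
  f_conj ((K * f_conj y - (K - 1)) / (K - (K + 1) * f_conj y)) = 2 * K - 1 / y.
Proof.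
  intros Hy HK. unfold f_conj.
  assert ((2 * K + 1) * y - 1 <> 0) by lra.
  field. repeat split; lra.
Qed.

Lemma f_conj_OOCF_right (K y : R) : 0 < y -> (2 * K - 1) * y <> 1 ->
  f_conj ((K - (K + 1) * f_conj y) / (K * f_conj y - (K - 1))) = 1 / y - 2 * K.
Proof.
  intros Hy HK. unfold f_conj.
  assert ((2 * K - 1) * y - 1 <> 0) by lra.
  field. repeat split; lra.
Qed.

Section Cylinders.

Variable K : R.
Hypothesis HK : 1 <= K.

Lemma f_conj_left_cylinder y : 1 / (2 * K) <= y <= 1 / (2 * K - 1) ->
  (K - 1) / K <= f_conj y <= (2 * K - 1) / (2 * K + 1).
Proof.
  intros Hy.
  assert (Hlo : f_conj (1 / (2 * K - 1)) = (K - 1) / K)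
    by (unfold f_conj; field; lra).
  assert (Hhi : f_conj (1 / (2 * K)) = (2 * K - 1) / (2 * K + 1))
    by (unfold f_conj; field; lra).
  assert (0 < 1 / (2 * K)) by (apply Rdiv_lt_0_compat; lra).
  rewrite <- Hlo, <- Hhi.
  split; apply f_conj_antitone; lra.
Qed.

Lemma f_conj_right_cylinder y : 1 / (2 * K + 1) <= y <= 1 / (2 * K) ->
  (2 * K - 1) / (2 * K + 1) <= f_conj y <= K / (K + 1).
Proof.
  intros Hy.
  assert (Hlo : f_conj (1 / (2 * K)) = (2 * K - 1) / (2 * K + 1))
    by (unfold f_conj; field; lra).
  assert (Hhi : f_conj (1 / (2 * K + 1)) = K / (K + 1))
    by (unfold f_conj; field; lra).
  assert (0 < 1 / (2 * K + 1)) by (apply Rdiv_lt_0_compat; lra).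
  rewrite <- Hlo, <- Hhi.
  split; apply f_conj_antitone; lra.
Qed.

End Cylinders.

Lemma OOCF_EICF_conjugate_pos (T TE : R -> R) (HT : is_OOCF_map T)
  (HTE : is_EICF_map TE) y : 0 < y <= 1 -> f_conj (T (f_conj y)) = TE y.
Proof.
  intros Hy.
  destruct HT as [T_left [T_right _]], HTE as [E_right [E_left _]].
  assert (Hz : 1 <= 1 / y).
  { apply (Rmult_le_reg_r y); [lra |]. field_simplify; lra. }
  assert (Hyz : y * (1 / y) = 1) by (field; lra).
  destruct (exists_EICF_digit (1 / y) Hz) as [k [Hk [Hcyl | Hcyl]]];
    assert (HK : 1 <= INR k) by exact (le_INR 1 k Hk).
  - assert ((2 * INR k + 1) * y <> 1) by nra.
    apply one_div_between in Hcyl; [| lra | lra].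
    rewrite (T_left k), (E_left k) by (try apply f_conj_left_cylinder; assumption).
    apply f_conj_OOCF_left; lra.
  - assert ((2 * INR k - 1) * y <> 1) by nra.
    apply one_div_between in Hcyl; [| lra | lra].
    rewrite (T_right k), (E_right k) by (try apply f_conj_right_cylinder; assumption).
    apply f_conj_OOCF_right; lra.
Qed.

Theorem mainTheorem5 (T TE : R -> R) (HT : is_OOCF_map T) (HTE : is_EICF_map TE) :
  ((forall x, 0 <= x <= 1 -> 0 <= f_conj x <= 1) /\
   (forall x y, 0 <= x <= 1 -> 0 <= y <= 1 -> f_conj x = f_conj y -> x = y) /\
   (forall y, 0 <= y <= 1 -> exists x, 0 <= x <= 1 /\ f_conj x = y)) /\
  (forall x y, 0 <= x <= 1 -> 0 <= y <= 1 -> f_conj x = y -> f_conj (T x) = TE y).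
Proof.
  split; [split; [exact f_conj_unit_interval | split] |].
  - intros x y Hx Hy Hxy.
    rewrite <- (f_conj_involutive x), <- (f_conj_involutive y), Hxy by lra.
    reflexivity.
  - intros y Hy. exists (f_conj y).
    split; [apply f_conj_unit_interval | apply f_conj_involutive]; lra.
  - intros x y Hx Hy <-.
    rewrite <- (f_conj_involutive x) at 1 by lra.
    destruct (Rle_lt_or_eq_dec 0 (f_conj x)) as [Hpos | Hzero];
      [apply f_conj_unit_interval; lra | |].
    + apply OOCF_EICF_conjugate_pos; [assumption .. | split; [assumption |]].
      apply f_conj_unit_interval; lra.
    + destruct HT as [_ [_ T_one]], HTE as [_ [_ E_zero]].
      rewrite <- Hzero, E_zero.
      replace (f_conj 0) with 1 by (unfold f_conj; field).
      rewrite T_one. unfold f_conj. field.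
Qed.
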